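(* Let $a=(a_1,\dots,a_d)\in\mathcal{UN}_d$ and let $A_a$ be a real symmetric matrix associated to $a$. Then for each $j=1,\dots,d$, all $j\times j$ principal minors of $A_a$ are equal.
   Context: A polynomial in $\mathbb{R}[z]$ is hyperbolic if all its roots are real. A sequence $a\in\mathbb{R}^d$ is a Nuij sequence if for every hyperbolic $p\in\mathbb{R}[z]$ of degree $d$, $p_a(z,s):=p(z)+\sum_{k=1}^d a_k s^k p^{(k)}(z)$ is hyperbolic for all $s\in\mathbb{R}$. A Nuij sequence $a$ admits a universal determinantal representation if there exists a real symmetric $d\times d$ matrix $A_a$ such that for every monic hyperbolic polynomial $p(z)=(z+\lambda_1)\cdots(z+\lambda_d)$ of degree $d$ one has $p_a(z,s)=\det(zI+D+sA_a)$, where $D$ is the diagonal matrix with diagonal entries $\lambda_1,\dots,\lambda_d$ in an arbitrary order; such $A_a$ is called a matrix associated to $a$. $\mathcal{UN}_d$ is the set of Nuij sequences in $\mathbb{R}^d$ admitting a universal determinantal representation. A $j\times j$ principal minor of a $d\times d$ matrix is the determinant of the submatrix obtained by deleting the same set of $d-j$ row and column indices. *)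

From HB Require Import structures.
From mathcomp Require Import all_boot all_order all_algebra.
From mathcomp Require Import reals.
From mathcomp.real_closed Require Import complex.
Set Implicit Arguments. Unset Strict Implicit. Unset Printing Implicit Defensive.
Import Order.TTheory GRing.Theory Num.Theory.
Local Open Scope ring_scope.
Local Open Scope complex_scope.

Definition hyperbolic (R : realType) (p : {poly R}) : Prop :=
  forall z : R[i], root (map_poly (fun x : R => x%:C) p) z -> Im z = 0.

(* p_a(z,s) = p(z) + sum_{k=1}^d a_k s^k p^(k)(z), as a polynomial in z for fixed s.
   The sequence a = (a_1,...,a_d) is stored as a row vector with a_k = a 0 (k-1). *)
Definition nuij_poly (R : realType) (d : nat) (a : 'rV[R]_d) (p : {poly R}) (s : R)
  : {poly R} :=
  p + \sum_(k < d) (a 0 k * s ^+ k.+1) *: p^`(k.+1).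

Definition nuij_seq (R : realType) (d : nat) (a : 'rV[R]_d) : Prop :=
  forall p : {poly R}, size p = d.+1 -> hyperbolic p ->
  forall s : R, hyperbolic (nuij_poly a p s).

(* A is a (real symmetric) matrix associated to a: for every monic hyperbolic
   p(z) = prod_i (z + lambda_i) (lambda_i listed in an arbitrary order),
   p_a(z,s) = det(zI + D + sA), D = diag(lambda). *)
Definition associated_matrix (R : realType) (d : nat) (a : 'rV[R]_d) (A : 'M[R]_d)
  : Prop :=
  A^T = A /\
  forall lam : 'rV[R]_d, forall z s : R,
    (nuij_poly a (\prod_(i < d) ('X + (lam 0 i)%:P)) s).[z]
    = \det (z%:M + diag_mx lam + s *: A).

Definition UN (R : realType) (d : nat) (a : 'rV[R]_d) : Prop :=
  nuij_seq a /\ exists A : 'M[R]_d, associated_matrix a A.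

Definition principal_minor (R : realType) (d : nat) (A : 'M[R]_d) (S : {set 'I_d}) : R :=
  \det (\matrix_(i < #|S|, k < #|S|) A (enum_val i) (enum_val k)).

(* Choose lambda_i = 0 for i in S and lambda_i = 1 otherwise, so that
   p(z) = z^j (z+1)^(d-j) does not depend on S beyond j = |S|.  Dividing
   row i of D + sA by s for i in S (s <> 0) shows that
   det(D + sA) = s^j det(N_S(s)), where N_S(s) has the rows of A on S and
   the rows of I + sA elsewhere; hence det N_S(s) = s^-j p_a(0,s) depends
   only on j.  Being polynomial in s, it also does at s = 0, where it is the
   principal minor of A on S (rows of the identity off S can be struck out). *)

From mathcomp Require Import all_boot all_order all_algebra.
From mathcomp Require Import zify ring.
From mathcomp Require Import reals.
Set Implicit Arguments. Unset Strict Implicit. Unset Printing Implicit Defensive.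
Import Order.TTheory GRing.Theory Num.Theory.
Local Open Scope ring_scope.

(* g lists the elements of P below n increasingly as g 0 < ... < g m.-1.
   Indexing by nat rather than ordinals lets the induction on n in
   det_eye_outside go through without casts between ordinal types. *)
Definition enumerates (P : pred nat) (n m : nat) (g : nat -> nat) : Prop :=
  [/\ forall i, (i < m)%N -> (g i < n)%N && P (g i),
      forall i k, (i < k < m)%N -> (g i < g k)%N
    & forall x, (x < n)%N -> P x -> exists2 i, (i < m)%N & g i = x].

Lemma enumerates_unbump (P : pred nat) n m g i0 : (i0 < n.+1)%N -> ~~ P i0 ->
  enumerates P n.+1 m g -> enumerates (P \o bump i0) n m (unbump i0 \o g).
Proof.
move=> i0n nPi0 [gP gmono gonto].
have gi0 i : (i < m)%N -> g i != i0.
  by move=> /gP /andP[_ Pgi]; apply: contraNneq nPi0 => <-.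
split=> [i im|i k /andP[ik km]|x xn Px] /=.
- have /andP[gin Pgi] := gP i im.
  rewrite unbumpKcond (negbTE (gi0 i im)) Pgi andbT; have := gi0 i im.
  by rewrite /unbump => /eqP; case: ltnP => /=; lia.
- have := gmono i k; rewrite ik km /= => /(_ isT).
  have := gi0 i (ltn_trans ik km); have := gi0 k km.
  rewrite /unbump => /eqP ? /eqP ?.
  by case: (ltnP i0 (g i)); case: (ltnP i0 (g k)) => /=; lia.
- have [|i im gi] := gonto (bump i0 x) _ Px; first by rewrite /bump; case: leqP => /=; lia.
  by exists i => //; rewrite gi bumpK.
Qed.

Lemma enumerates_all (P : pred nat) n m g : (forall x, (x < n)%N -> P x) ->
  enumerates P n m g -> m = n /\ forall i, (i < m)%N -> g i = i.
Proof.
move=> Pn [gP gmono gonto].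
have gn i : (i < m)%N -> (g i < n)%N by move=> /gP /andP[].
have ge_g i : (i < m)%N -> (i <= g i)%N.
  elim: i => // i IHi im; have := gmono i i.+1; rewrite ltnSn im => /(_ isT).
  by have := IHi (ltnW im); lia.
have gid i : (i < m)%N -> g i = i.
  elim/ltn_ind: i => i IHi im; have gin := leq_ltn_trans (ge_g i im) (gn i im).
  have [k km gk] := gonto i gin (Pn i gin).
  case: (ltngtP k i) => [ki|ik|eki]; last by move: gk; rewrite eki.
    by have := IHi k ki km; rewrite gk => eki; move: ki; rewrite eki ltnn.
  by have := gmono i k; rewrite ik km gk => /(_ isT); have := ge_g i im; lia.
split=> //; apply/eqP; rewrite eqn_leq; apply/andP; split.
  by case: (leqP m n) => // nm; have := gn n nm; rewrite gid //; lia.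
case: n Pn gonto {gP gn} => // n Pn gonto.
by have [k km] := gonto n (ltnSn n) (Pn n (ltnSn n)); rewrite gid // => <-.
Qed.

Section DetEyeOutside.
Variable R : comNzRingType.

Lemma det_delta_row n (M : 'M[R]_n.+1) i0 :
  (forall k, M i0 k = (i0 == k)%:R) -> \det M = \det (row' i0 (col' i0 M)).
Proof.
move=> Mi0; rewrite (expand_det_row _ i0) (bigD1 i0) //= big1 => [|k /negPf ki0].
  by rewrite Mi0 eqxx mul1r addr0 /cofactor -signr_odd addnn odd_double mul1r.
by rewrite Mi0 eq_sym ki0 mul0r.
Qed.

Definition eye_outside n (P : pred nat) (F : nat -> nat -> R) : 'M[R]_n :=
  \matrix_(i, k) if P i then F i k else (i == k)%:R.

Lemma det_eye_outside n m (P : pred nat) F g : enumerates P n m g ->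
  \det (eye_outside n P F) = \det (\matrix_(i < m, k < m) F (g i) (g k)).
Proof.
elim: n m P F g => [|n IHn] m P F g gP.
  have P0 x : (x < 0)%N -> P x by [].
  by have [-> _] := enumerates_all P0 gP; rewrite !det_mx00.
have [/existsP[i0 nPi0]|/existsPn Pall] := boolP [exists i : 'I_n.+1, ~~ P i].
  rewrite (det_delta_row (i0 := i0)) => [|k]; last by rewrite mxE (negbTE nPi0).
  have -> : row' i0 (col' i0 (eye_outside n.+1 P F)) =
      eye_outside n (P \o bump i0) (fun i k => F (bump i0 i) (bump i0 k)).
    apply/matrixP => i k; rewrite !mxE /=.
    by case: (P _) => //; rewrite (inj_eq (@lift_inj _ i0)).
  rewrite (IHn _ _ _ _ (enumerates_unbump (ltn_ord i0) nPi0 gP)).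
  have [g_inP _ _] := gP.
  congr (\det _); apply/matrixP => i k; rewrite !mxE /= !unbumpKcond.
  have gi0 (x : 'I_m) : (g x == i0) = false.
    by apply: contraNF nPi0 => /eqP <-; have /andP[] := g_inP x (ltn_ord x).
  by rewrite !gi0.
have Pn x : (x < n.+1)%N -> P x by move=> xn; have := Pall (Ordinal xn); rewrite negbK.
have [em gid] := enumerates_all Pn gP; subst m.
by congr (\det _); apply/matrixP => i k; rewrite !mxE !gid // Pn.
Qed.

End DetEyeOutside.

Lemma sorted_ltn_enum_set n (S : {set 'I_n}) : sorted ltn (map val (enum S)).
Proof.
rewrite sorted_map /enum_mem; apply: sorted_filter; first exact: ltn_trans.
by have := iota_ltn_sorted 0 n; rewrite -val_enum_ord sorted_map enumT.
Qed.

Lemma enumerates_enum_set n (S : {set 'I_n.+1}) :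
  enumerates (fun x => inord x \in S) n.+1 #|S| (nth 0%N (map val (enum S))).
Proof.
have sizeS : size (map val (enum S)) = #|S| by rewrite size_map -cardE.
split=> [i iS|i k /andP[ik kS]|x xn xS].
- rewrite cardE in iS.
  by rewrite (nth_map ord0) //= ltn_ord inord_val -mem_enum mem_nth.
- apply: (sorted_ltn_nth ltn_trans 0%N (sorted_ltn_enum_set S)) => //.
    by rewrite inE sizeS (ltn_trans ik kS).
  by rewrite inE sizeS.
- exists (index (inord x) (enum S)); first by rewrite cardE index_mem mem_enum.
  by rewrite (nth_map ord0) ?index_mem ?mem_enum // nth_index ?mem_enum // /= inordK.
Qed.

Lemma det_eye_outside_set (R : comNzRingType) n (M : 'M[R]_n.+1) (S : {set 'I_n.+1}) :
  \det (\matrix_(i, k) if i \in S then M i k else (i == k)%:R)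
  = \det (\matrix_(i < #|S|, k < #|S|) M (enum_val i) (enum_val k)).
Proof.
pose F i k := M (inord i) (inord k).
have -> : \matrix_(i, k) (if i \in S then M i k else (i == k)%:R)
    = eye_outside n.+1 (fun x => inord x \in S) F.
  by apply/matrixP => i k; rewrite !mxE /F !inord_val.
rewrite (det_eye_outside _ (enumerates_enum_set S)); congr (\det _).
apply/matrixP => i k; rewrite !mxE /F.
by rewrite !(nth_map ord0) -?cardE ?ltn_ord // -!enum_val_nth !inord_val.
Qed.

Lemma poly_eq_on_nonzero (R : numDomainType) (p q : {poly R}) :
  (forall x, x != 0 -> p.[x] = q.[x]) -> p = q.
Proof.
move=> eqpq; apply/eqP; rewrite -subr_eq0; apply/negPn/negP => pq_neq0.
pose nats := [seq i.+1%:R : R | i <- iota 0 (size (p - q))].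
have roots : all (root (p - q)) nats.
  by apply/allP => _ /mapP[i _ ->]; rewrite rootE !hornerE eqpq ?subrr ?pnatr_eq0.
have uniq_nats : uniq nats.
  by rewrite map_inj_uniq ?iota_uniq // => i k /eqP; rewrite eqr_nat eqSS => /eqP.
by have := max_poly_roots pq_neq0 roots uniq_nats; rewrite size_map size_iota ltnn.
Qed.

Section Pencil.
Variables (R : comNzRingType) (d : nat) (A : 'M[R]_d).

Definition pencil (U : {set 'I_d}) (s : R) : 'M[R]_d :=
  \matrix_(i, k) if i \in U then A i k else (i == k)%:R + s * A i k.

Definition pencil_poly (U : {set 'I_d}) : 'M[{poly R}]_d :=
  \matrix_(i, k) if i \in U then (A i k)%:P else (i == k)%:R + 'X * (A i k)%:P.

Lemma horner_det_pencil_poly U s : (\det (pencil_poly U)).[s] = \det (pencil U s).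
Proof.
rewrite -horner_evalE -det_map_mx; congr (\det _).
apply/matrixP => i k; rewrite !mxE /= horner_evalE.
by case: (i \in U); rewrite ?hornerE // hornerMn hornerC.
Qed.

Definition indicator_compl (U : {set 'I_d}) : 'rV[R]_d :=
  \row_i (if i \in U then 0 else 1).

Lemma diag_indicator_pencil U s :
  diag_mx (indicator_compl U) + s *: A
  = diag_mx (\row_i (if i \in U then s else 1)) *m pencil U s.
Proof.
apply/matrixP => i k; rewrite mul_diag_mx !mxE.
by case: (i \in U); case: (i == k); rewrite ?mulr1n ?mulr0n /=; ring.
Qed.

Lemma det_diag_indicator_pencil U s :
  \det (diag_mx (indicator_compl U) + s *: A) = s ^+ #|U| * \det (pencil U s).
Proof.
rewrite diag_indicator_pencil det_mulmx det_diag; congr (_ * _).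
rewrite (eq_bigr (fun i => if i \in U then s else 1)) => [|i _]; last by rewrite mxE.
by rewrite -big_mkcond prodr_const.
Qed.

Lemma prod_indicator_compl U :
  \prod_i ('X + (indicator_compl U 0 i)%:P) = 'X ^+ #|U| * ('X + 1) ^+ (d - #|U|).
Proof.
rewrite (bigID (mem U)) /= (eq_bigr (fun _ => 'X)) => [|i iU]; last by rewrite mxE iU addr0.
rewrite [X in _ * X](eq_bigr (fun _ => 'X + 1)) => [|i /negPf iU]; last by rewrite mxE iU.
rewrite !prodr_const; congr (_ * _ ^+ _).
by rewrite (@eq_card _ _ (~: U)) => [|i]; rewrite ?inE // cardsCs setCK card_ord.
Qed.

End Pencil.

Lemma principal_minor_pencil0 (R : realType) d (A : 'M[R]_d.+1) S :
  principal_minor A S = \det (pencil A S 0).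
Proof.
rewrite /principal_minor -det_eye_outside_set; congr (\det _).
by apply/matrixP => i k; rewrite !mxE mul0r addr0.
Qed.

Section AssociatedMatrix.
Variables (R : realType) (d : nat) (a : 'rV[R]_d) (A : 'M[R]_d).
Hypothesis A_assoc : associated_matrix a A.

Lemma det_pencil_card_nonzero (U V : {set 'I_d}) s : s != 0 -> #|U| = #|V| ->
  \det (pencil A U s) = \det (pencil A V s).
Proof.
move=> s_neq0 UV; have [_ detE] := A_assoc.
have nuijE (W : {set 'I_d}) : s ^+ #|W| * \det (pencil A W s)
    = (nuij_poly a ('X ^+ #|W| * ('X + 1) ^+ (d - #|W|)) s).[0].
  by rewrite -det_diag_indicator_pencil -prod_indicator_compl detE raddf0 add0r.
by apply: (mulfI (expf_neq0 #|U| s_neq0)); rewrite nuijE UV -nuijE.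
Qed.

Lemma det_pencil_card (U V : {set 'I_d}) s : #|U| = #|V| ->
  \det (pencil A U s) = \det (pencil A V s).
Proof.
move=> UV; rewrite -!horner_det_pencil_poly; congr (_.[s]).
apply: poly_eq_on_nonzero => x x_neq0; rewrite !horner_det_pencil_poly.
exact: det_pencil_card_nonzero.
Qed.

End AssociatedMatrix.

Theorem lemma3p3 (R : realType) (d : nat) (a : 'rV[R]_d) (A : 'M[R]_d) :
  UN a -> associated_matrix a A ->
  forall j : nat, (1 <= j <= d)%N ->
  forall S T : {set 'I_d}, #|S| = j -> #|T| = j ->
  principal_minor A S = principal_minor A T.
Proof.
move=> _ A_assoc j /andP[j_gt0 j_le_d] S T cardS cardT.
case: d a A A_assoc S T cardS cardT j_le_d
  => [|d] a A A_assoc S T cardS cardT j_le_d.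
  by move: j_gt0; rewrite leqn0 in j_le_d; rewrite (eqP j_le_d).
by rewrite !principal_minor_pencil0 (det_pencil_card A_assoc (V := T)) // cardS cardT.
Qed.
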